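(* Let $C$ be a linear code over $\mathbb{Z}_4+u\mathbb{Z}_4$ of length $n$, let $D$ be a non-zero linear code over $\mathbb{Z}_4$ and $E$ a non-zero linear code over $\mathbb{F}_2+u\mathbb{F}_2$ such that $\mu(C)=D$ and $\alpha(C)=E$. Let $d,d',d''$ denote the minimum Lee weights of $C$, $D$ and $E$ respectively. Then $d\le 2d'$ and $d\le 2d''$.
   Context: $\mathbb{Z}_4+u\mathbb{Z}_4$ is the commutative ring of characteristic $4$ with $u^2=0$; $\mathbb{F}_2+u\mathbb{F}_2$ is the commutative ring $\{0,1,u,1+u\}$ of characteristic $2$ with $u^2=0$. A linear code over a ring $R$ is an $R$-submodule of $R^n$. Lee weights: on $\mathbb{Z}_4$, $w_L(0)=0,w_L(1)=w_L(3)=1,w_L(2)=2$; on $\mathbb{Z}_4+u\mathbb{Z}_4$, $w_L(a+ub)=w_L(b)+w_L(a+b)$; on $\mathbb{F}_2+u\mathbb{F}_2$, $w_L(0)=0$, $w_L(1)=w_L(1+u)=1$, $w_L(u)=2$; all extended additively to vectors; minimum Lee weight is the minimum over nonzero codewords. For $\overline{a},\overline{b}\in\mathbb{Z}_4^n$, $\mu(\overline{a}+u\overline{b})=\overline{a}$; $\alpha$ is coordinatewise reduction modulo $2$ from $\mathbb{Z}_4+u\mathbb{Z}_4$ to $\mathbb{F}_2+u\mathbb{F}_2$. *)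

From mathcomp Require Import all_boot all_algebra.
Set Implicit Arguments. Unset Strict Implicit. Unset Printing Implicit Defensive.
Import GRing.Theory.
Local Open Scope ring_scope.

Notation Z4 := 'Z_4.
Notation F2 := 'Z_2.

(* Element a + u b of Z4 + uZ4 is the pair (a, b); u^2 = 0. *)
Definition RZ4 := (Z4 * Z4)%type.
Definition addRZ4 (x y : RZ4) : RZ4 := (x.1 + y.1, x.2 + y.2).
Definition mulRZ4 (x y : RZ4) : RZ4 := (x.1 * y.1, x.1 * y.2 + x.2 * y.1).
Definition zeroRZ4 : RZ4 := (0, 0).

(* Element a + u b of F2 + uF2 is the pair (a, b); u^2 = 0. *)
Definition RF2 := (F2 * F2)%type.
Definition addRF2 (x y : RF2) : RF2 := (x.1 + y.1, x.2 + y.2).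
Definition mulRF2 (x y : RF2) : RF2 := (x.1 * y.1, x.1 * y.2 + x.2 * y.1).
Definition zeroRF2 : RF2 := (0, 0).

Definition linear_RZ4 n (C : {set {ffun 'I_n -> RZ4}}) : Prop :=
  [/\ [ffun=> zeroRZ4] \in C,
      forall x y, x \in C -> y \in C -> [ffun i => addRZ4 (x i) (y i)] \in C
    & forall (r : RZ4) x, x \in C -> [ffun i => mulRZ4 r (x i)] \in C].

Definition linear_Z4 n (C : {set {ffun 'I_n -> Z4}}) : Prop :=
  [/\ [ffun=> 0] \in C,
      forall x y, x \in C -> y \in C -> [ffun i => x i + y i] \in C
    & forall (r : Z4) x, x \in C -> [ffun i => r * x i] \in C].

Definition linear_RF2 n (C : {set {ffun 'I_n -> RF2}}) : Prop :=
  [/\ [ffun=> zeroRF2] \in C,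
      forall x y, x \in C -> y \in C -> [ffun i => addRF2 (x i) (y i)] \in C
    & forall (r : RF2) x, x \in C -> [ffun i => mulRF2 r (x i)] \in C].

Definition leeZ4 (x : Z4) : nat :=
  match nat_of_ord x with 0 => 0 | 2 => 2 | _ => 1 end%N.
Definition leeRZ4 (x : RZ4) : nat := (leeZ4 x.2 + leeZ4 (x.1 + x.2)%R)%N.
Definition leeRF2 (x : RF2) : nat :=
  match nat_of_ord x.1, nat_of_ord x.2 with
  | 0, 0 => 0 | 0, _ => 2 | _, _ => 1 end%N.

Definition wtZ4 n (x : {ffun 'I_n -> Z4}) : nat := (\sum_i leeZ4 (x i))%N.
Definition wtRZ4 n (x : {ffun 'I_n -> RZ4}) : nat := (\sum_i leeRZ4 (x i))%N.
Definition wtRF2 n (x : {ffun 'I_n -> RF2}) : nat := (\sum_i leeRF2 (x i))%N.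

Definition is_min_weight (T : finType) (zero : T) (wt : T -> nat)
    (C : {set T}) (d : nat) : Prop :=
  (exists2 c, c \in C & c != zero /\ wt c = d) /\
  (forall c, c \in C -> c != zero -> (d <= wt c)%N).

Definition mu n (x : {ffun 'I_n -> RZ4}) : {ffun 'I_n -> Z4} := [ffun i => (x i).1].
Definition red2 (a : Z4) : F2 := (nat_of_ord a)%:R.
Definition alpha n (x : {ffun 'I_n -> RZ4}) : {ffun 'I_n -> RF2} :=
  [ffun i => (red2 (x i).1, red2 (x i).2)].

From mathcomp Require Import all_boot all_algebra.
Set Implicit Arguments. Unset Strict Implicit. Unset Printing Implicit Defensive.
Import GRing.Theory.
Local Open Scope ring_scope.

(* For a codeword [c = a + u b] of [C], the codeword [u c = u a] has Lee weight
   [wt a + wt a = 2 wt (mu c)], and [2 c = 2 a + u 2 b] depends only on [c]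
   modulo 2, its weight being [2 wt (alpha c)].  Scaling minimum weight
   codewords of [D] and [E] back into [C] thus gives the two bounds. *)

Lemma min_weight_le_scaled (T U : finType) (zT : T) (zU : U)
    (wtT : T -> nat) (wtU : U -> nat) (C : {set T}) (D : {set U})
    (d d' k : nat) :
  is_min_weight zT wtT C d -> is_min_weight zU wtU D d' ->
  (forall y, y \in D -> y != zU ->
     exists2 x, x \in C & x != zT /\ wtT x = (k * wtU y)%N) ->
  (d <= k * d')%N.
Proof.
move=> [_ dC] [[y yD [y_nz <-]] _] /(_ y yD y_nz) [x xC [x_nz <-]].
exact: dC.
Qed.

Lemma Z4_ind (P : Z4 -> Prop) : P 0 -> P 1 -> P 2 -> P 3 -> forall a, P a.
Proof.
move=> P0 P1 P2 P3 [[|[|[|[|k]]]] lt_k4] //.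
- by have -> : Ordinal lt_k4 = 0 by apply: val_inj.
- by have -> : Ordinal lt_k4 = 1 by apply: val_inj.
- by have -> : Ordinal lt_k4 = 2 by apply: val_inj.
- by have -> : Ordinal lt_k4 = 3 by apply: val_inj.
Qed.

Definition uRZ4 : RZ4 := (0, 1).
Definition twoRZ4 : RZ4 := (2, 0).

Definition scaleRZ4 n (r : RZ4) (c : {ffun 'I_n -> RZ4}) : {ffun 'I_n -> RZ4} :=
  [ffun i => mulRZ4 r (c i)].

Lemma mulRZ4_u (p : RZ4) : mulRZ4 uRZ4 p = (0, p.1).
Proof. by case: p => a b; rewrite /mulRZ4 /uRZ4 /= !mul0r add0r mul1r. Qed.

Lemma leeRZ4_u (a : Z4) : leeRZ4 (0, a) = (2 * leeZ4 a)%N.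
Proof. by rewrite /leeRZ4 /= add0r addnn -mul2n. Qed.

Lemma leeRZ4_two (p : RZ4) :
  leeRZ4 (mulRZ4 twoRZ4 p) = (2 * leeRF2 (red2 p.1, red2 p.2))%N.
Proof. by case: p => a b; elim/Z4_ind: a; elim/Z4_ind: b; vm_compute. Qed.

Lemma mulRZ4_two_eq0 (p : RZ4) :
  (mulRZ4 twoRZ4 p == zeroRZ4) = ((red2 p.1, red2 p.2) == zeroRF2).
Proof. by case: p => a b; elim/Z4_ind: a; elim/Z4_ind: b; vm_compute. Qed.

Section ScaledCodewords.
Variables (n : nat) (c : {ffun 'I_n -> RZ4}).

Lemma wtRZ4_scale_u : wtRZ4 (scaleRZ4 uRZ4 c) = (2 * wtZ4 (mu c))%N.
Proof.
rewrite /wtRZ4 /wtZ4 big_distrr; apply: eq_bigr => i _.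
by rewrite !ffunE mulRZ4_u leeRZ4_u.
Qed.

Lemma scale_u_eq0 : (scaleRZ4 uRZ4 c == [ffun=> zeroRZ4]) = (mu c == [ffun=> 0]).
Proof.
apply/eqP/eqP => /ffunP c0; apply/ffunP => i; move: (c0 i); rewrite !ffunE.
- by rewrite mulRZ4_u => -[].
- by rewrite mulRZ4_u => ->.
Qed.

Lemma wtRZ4_scale_two : wtRZ4 (scaleRZ4 twoRZ4 c) = (2 * wtRF2 (alpha c))%N.
Proof.
rewrite /wtRZ4 /wtRF2 big_distrr; apply: eq_bigr => i _.
by rewrite !ffunE leeRZ4_two.
Qed.

Lemma scale_two_eq0 :
  (scaleRZ4 twoRZ4 c == [ffun=> zeroRZ4]) = (alpha c == [ffun=> zeroRF2]).
Proof.
apply/eqP/eqP => /ffunP c0; apply/ffunP => i; move: (c0 i); rewrite !ffunE.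
- by move/eqP; rewrite mulRZ4_two_eq0 => /eqP.
- by move/eqP; rewrite -mulRZ4_two_eq0 => /eqP.
Qed.

End ScaledCodewords.

Theorem theorem4p6 (n : nat) (C : {set {ffun 'I_n -> RZ4}})
    (D : {set {ffun 'I_n -> Z4}}) (E : {set {ffun 'I_n -> RF2}})
    (d d' d'' : nat) :
  linear_RZ4 C -> linear_Z4 D -> linear_RF2 E ->
  D != [set [ffun=> 0]] -> E != [set [ffun=> zeroRF2]] ->
  [set mu c | c in C] = D -> [set alpha c | c in C] = E ->
  is_min_weight [ffun=> zeroRZ4] (@wtRZ4 n) C d ->
  is_min_weight [ffun=> 0] (@wtZ4 n) D d' ->
  is_min_weight [ffun=> zeroRF2] (@wtRF2 n) E d'' ->
  (d <= 2 * d')%N /\ (d <= 2 * d'')%N.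
Proof.
move=> [_ _ scaleC] _ _ _ _ <- <- minC minD minE; split.
- apply: (min_weight_le_scaled minC minD) => _ /imsetP[c cC ->] mu_nz.
  exists (scaleRZ4 uRZ4 c); first exact: scaleC.
  by rewrite scale_u_eq0 wtRZ4_scale_u.
- apply: (min_weight_le_scaled minC minE) => _ /imsetP[c cC ->] alpha_nz.
  exists (scaleRZ4 twoRZ4 c); first exact: scaleC.
  by rewrite scale_two_eq0 wtRZ4_scale_two.
Qed.
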